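(* Let $f\in C^1[0,1]$ with $f(0)=0$, $h:=f'$, $q$ satisfying (q), assume $\lim_{\varphi\to0^+}q(\varphi)/\varphi$ exists in $[0,\infty)$, $\int_0^\delta q(\sigma)/\sigma^2\,d\sigma<+\infty$ for some $\delta\in(0,1)$, and $c^*>h(0)$. Then for every $c>c^*$, $\beta(c)=\hat\beta(c)$.
   Context: Condition (q): $q\in C[0,1]$, $q>0$ on $(0,1)$, $q(0)=q(1)=0$, and $\limsup_{\varphi\to0^+}q(\varphi)/\varphi<+\infty$. For $c\in\mathbb R$, a solution of problem $(P_c)$ is a function $z\in C[0,1]\cap C^1(0,1)$ with $\dot z(\varphi)=h(\varphi)-c-q(\varphi)/z(\varphi)$ and $z(\varphi)<0$ for all $\varphi\in(0,1)$, and $z(0)=0$. $c^*$ denotes the real number such that $(P_c)$ has a solution with $z(1)=0$ iff $c\ge c^*$ (unique); $z^*$ is this solution for $c=c^*$. For $c>c^*$, $\beta(c)<0$ is the number such that, for $b<0$, $(P_c)$ has a solution with $z(1)=b$ iff $b\ge\beta(c)$. For $c>c^*$ and $\varphi_0\in(0,1)$, $\hat z_{\varphi_0}$ is the unique function in $C[0,1]\cap C^1(0,1)$ solving $\dot z=h-c-q/z$, $z<0$ on $(0,1)$, with $\hat z_{\varphi_0}(\varphi_0)=z^*(\varphi_0)$; these are increasing in $\varphi_0$, and $\hat z:=\lim_{\varphi_0\to0^+}\hat z_{\varphi_0}$ (a solution of $(P_c)$); $\hat\beta(c):=\hat z(1)$. *)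

From Stdlib Require Import Reals.
From Coquelicot Require Import Coquelicot.
Open Scope R_scope.

Definition I01 (x : R) : Prop := 0 <= x <= 1.
Definition J01 (x : R) : Prop := 0 < x < 1.

Definition cont01 (g : R -> R) : Prop :=
  forall x, I01 x -> filterlim g (within I01 (locally x)) (locally (g x)).

(* f ∈ C^1[0,1] with derivative h = f' (one-sided derivatives at 0 and 1,
   h continuous on [0,1]) *)
Definition C1_with_deriv (f h : R -> R) : Prop :=
  cont01 h /\
  forall x, I01 x ->
    filterlim (fun y => (f y - f x) / (y - x))
      (within (fun y => I01 y /\ y <> x) (locally x)) (locally (h x)).

Definition cond_q (q : R -> R) : Prop :=
  cont01 q /\ (forall x, J01 x -> 0 < q x) /\ q 0 = 0 /\ q 1 = 0 /\
  (* limsup_{phi -> 0+} q(phi)/phi < +oo *)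
  exists M : R, (at_right 0) (fun p => q p / p <= M).

Definition solves_ode (h q : R -> R) (c : R) (z : R -> R) : Prop :=
  cont01 z /\
  (forall x, J01 x -> is_derive z x (h x - c - q x / z x)) /\
  (forall x, J01 x -> z x < 0).

Definition solves_Pc (h q : R -> R) (c : R) (z : R -> R) : Prop :=
  solves_ode h q c z /\ z 0 = 0.

From Stdlib Require Import Reals Lra Classical.
From Coquelicot Require Import Coquelicot.
Open Scope R_scope.

(* Let z be the solution of (P_c) with z(1) = beta(c), and for small phi0
   let y := zhat_{phi0}.  Comparing y with z^* (a solution for the smaller
   speed c^* ) shows y(0) = 0, so y solves (P_c) and beta(c) <= y(1); the
   comparison principle for equal speeds then gives z <= y on (0,1).  The gap
   W = y - z solves the linear equation W' = q/(yz) W, and beyond phi0 the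
   solution y stays below the line -(c - c^* )(phi - phi0)/2.  Hence q/(yz) is
   dominated by a multiple of q/phi^2 on [2 phi0, delta] and by a constant on
   [delta, 1]; Gronwall's inequality, the integrability of q/phi^2 near 0 and
   the bound z(phi) >= -M phi near 0 give 0 <= y(1) - beta(c) <= C phi0.
   Letting phi0 -> 0 yields beta(c) = betahat(c). *)

Lemma exp_le a b : a <= b -> exp a <= exp b.
Proof. intros [H|H]; [left; apply exp_increasing; exact H | subst; lra]. Qed.

Lemma div_neg_le y z Q : y <= z -> z < 0 -> 0 <= Q -> Q / z <= Q / y.
Proof.
  intros Hyz Hz HQ. unfold Rdiv. apply Rmult_le_compat_l; [exact HQ|].
  assert (H := Rinv_le_contravar (- z) (- y) ltac:(lra) ltac:(lra)).
  rewrite !Rinv_opp in H. lra.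
Qed.

Lemma div_neg_lt y z Q : y < z -> z < 0 -> 0 < Q -> Q / z < Q / y.
Proof.
  intros Hyz Hz HQ. unfold Rdiv. apply Rmult_lt_compat_l; [exact HQ|].
  assert (H := Rinv_lt_contravar (- z) (- y)
                 ltac:(apply Rmult_lt_0_compat; lra) ltac:(lra)).
  rewrite !Rinv_opp in H. lra.
Qed.

Lemma div_by_product_le Q y z m : 0 <= Q -> 0 < m -> y <= - m -> z <= y ->
  Q / (y * z) <= Q / (m * m).
Proof.
  intros HQ Hm Hy Hz. unfold Rdiv. apply Rmult_le_compat_l; [exact HQ|].
  apply Rinv_le_contravar; nra.
Qed.

Lemma cont01_within g x (D : R -> Prop) r : cont01 g -> I01 x -> 0 < r ->
  (forall u, D u -> Rabs (u - x) < r -> I01 u) ->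
  filterlim g (within D (locally x)) (locally (g x)).
Proof.
  intros Hg Hx Hr HD P HP.
  destruct (Hg x Hx P HP) as [d Hd].
  exists (mkposreal _ (Rmin_glb_lt _ _ _ (cond_pos d) Hr)).
  intros u Hu HDu. change (Rabs (u - x) < Rmin d r) in Hu.
  assert (Rmin d r <= d) by apply Rmin_l. assert (Rmin d r <= r) by apply Rmin_r.
  apply Hd; [change (Rabs (u - x) < d); lra | apply HD; [exact HDu | lra]].
Qed.

Lemma cont01_at_left g x : cont01 g -> 0 < x <= 1 ->
  filterlim g (at_left x) (locally (g x)).
Proof.
  intros Hg Hx. apply (cont01_within g x _ x Hg ltac:(red; lra) ltac:(lra)).
  intros u Hu Hux. apply Rabs_def2 in Hux. red; lra.
Qed.

Lemma cont01_at_right g x : cont01 g -> 0 <= x < 1 ->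
  filterlim g (at_right x) (locally (g x)).
Proof.
  intros Hg Hx. apply (cont01_within g x _ (1 - x) Hg ltac:(red; lra) ltac:(lra)).
  intros u Hu Hux. apply Rabs_def2 in Hux. red; lra.
Qed.

Lemma cont01_interior g x : cont01 g -> J01 x -> continuous g x.
Proof.
  intros Hg Hx P HP. red in Hx.
  assert (Hr : 0 < Rmin x (1 - x)) by (apply Rmin_glb_lt; lra).
  destruct (cont01_within g x (fun _ => True) _ Hg ltac:(red; lra) Hr) with (P := P)
    as [d Hd]; [|exact HP|].
  - intros u _ Hu. assert (Rmin x (1 - x) <= x) by apply Rmin_l.
    assert (Rmin x (1 - x) <= 1 - x) by apply Rmin_r.
    apply Rabs_def2 in Hu. red; lra.
  - exists d. intros u Hu. exact (Hd u Hu I).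
Qed.

Lemma cont01_minus y z : cont01 y -> cont01 z -> cont01 (fun r => y r - z r).
Proof.
  intros Hy Hz x Hx.
  apply (filterlim_comp_2 (H := locally (opp (z x))) y (fun r => opp (z r)) plus (Hy x Hx)).
  - apply filterlim_comp with (G := locally (z x)); [exact (Hz x Hx) | apply (@filterlim_opp R_AbsRing R_NormedModule)].
  - apply (@filterlim_plus R_AbsRing R_NormedModule).
Qed.

Lemma le_limit_left (g1 g2 : R -> R) a x l1 l2 : a < x ->
  filterlim g1 (at_left x) (locally l1) -> filterlim g2 (at_left x) (locally l2) ->
  (forall r, a < r < x -> g1 r <= g2 r) -> l1 <= l2.
Proof.
  intros Hax H1 H2 Hle.
  assert (H := filterlim_le (F := at_left x) g1 g2 l1 l2); simpl in H.
  apply H; [| exact H1 | exact H2].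
  exists (mkposreal (x - a) ltac:(lra)). intros r Hr Hrx.
  change (Rabs (r - x) < x - a) in Hr. apply Rabs_def2 in Hr. apply Hle; lra.
Qed.

Lemma le_limit_right (g1 g2 : R -> R) a x l1 l2 : x < a ->
  filterlim g1 (at_right x) (locally l1) -> filterlim g2 (at_right x) (locally l2) ->
  (forall r, x < r < a -> g1 r <= g2 r) -> l1 <= l2.
Proof.
  intros Hxa H1 H2 Hle.
  assert (H := filterlim_le (F := at_right x) g1 g2 l1 l2); simpl in H.
  apply H; [| exact H1 | exact H2].
  exists (mkposreal (a - x) ltac:(lra)). intros r Hr Hrx.
  change (Rabs (r - x) < a - x) in Hr. apply Rabs_def2 in Hr. apply Hle; lra.
Qed.

(* A continuous function on [0,1] is bounded above there: clamp the argument
   into [0,1] and apply the extreme value theorem on [0,1]. *)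
Lemma bounded01 g : cont01 g -> exists Q, forall x, I01 x -> g x <= Q.
Proof.
  intros Hg.
  set (cl := fun x => Rmax 0 (Rmin x 1)).
  assert (Hcl : forall x, I01 (cl x)).
  { intros x. unfold cl, I01. split; [apply Rmax_l|].
    apply Rmax_lub; [lra | apply Rmin_r]. }
  assert (Hclid : forall x, I01 x -> cl x = x).
  { intros x [Hx0 Hx1]. unfold cl. rewrite Rmin_left, Rmax_right; lra. }
  assert (Hlip : forall x y, I01 x -> Rabs (cl y - x) <= Rabs (y - x)).
  { intros x y [Hx0 Hx1]. unfold cl, Rmax, Rmin.
    destruct (Rle_dec y 1); destruct (Rle_dec 0 _); unfold Rabs;
      repeat destruct Rcase_abs; lra. }
  destruct (continuity_ab_maj (fun x => g (cl x)) 0 1 ltac:(lra)) as [xm [Hxm _]].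
  - intros x Hx. apply continuity_pt_filterlim. cbv beta. rewrite (Hclid x Hx).
    apply (filterlim_comp _ _ _ cl g _ (within I01 (locally x))).
    + intros P [d Hd]. exists d. intros u Hu. apply Hd; [| apply Hcl].
      change (Rabs (cl u - x) < d). eapply Rle_lt_trans; [apply Hlip, Hx | exact Hu].
    + exact (Hg x Hx).
  - exists (g (cl xm)). intros x Hx. rewrite <- (Hclid x Hx). apply Hxm, Hx.
Qed.

Lemma is_derive_eq (f : R -> R) (x l l' : R) : is_derive f x l -> l = l' -> is_derive f x l'.
Proof. intros H E; subst; exact H. Qed.

Lemma is_derive_Rminus (y z : R -> R) x dy dz : is_derive y x dy -> is_derive z x dz ->
  is_derive (fun r => y r - z r) x (dy - dz).
Proof.
  intros H1 H2. apply (is_derive_eq _ _ _ _ (is_derive_minus _ _ _ _ _ H1 H2)).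
  unfold minus, plus, opp; simpl. ring.
Qed.

Lemma derive_close (g : R -> R) x l : is_derive g x l ->
  forall e, 0 < e -> exists d, 0 < d /\ forall y, Rabs (y - x) < d -> Rabs (g y - g x) < e.
Proof.
  intros H e He.
  assert (Hc : continuous g x) by (apply (@ex_derive_continuous R_AbsRing R_NormedModule); exists l; exact H).
  destruct (proj1 (filterlim_locally _ _) Hc (mkposreal e He)) as [d Hd].
  exists d. split; [apply cond_pos | intros y Hy; exact (Hd y Hy)].
Qed.

Lemma derive_neg_local (g : R -> R) r d : is_derive g r d -> d < 0 ->
  exists eps, 0 < eps /\ (forall x, r < x < r + eps -> g x < g r) /\
                         (forall x, r - eps < x < r -> g r < g x).
Proof.
  intros H Hd. apply is_derive_Reals in H.
  destruct (H (- d / 2)) as [del Hdel]; [lra|].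
  assert (Hq : forall x, 0 < Rabs (x - r) < del ->
            (g x - g r) / (x - r) < d / 2).
  { intros x Hx. assert (x - r <> 0) by (intro E; rewrite E, Rabs_R0 in Hx; lra).
    specialize (Hdel (x - r) H0 ltac:(lra)).
    replace (r + (x - r)) with x in Hdel by ring. apply Rabs_def2 in Hdel. lra. }
  exists del. split; [apply cond_pos | split]; intros x Hx.
  - specialize (Hq x ltac:(rewrite Rabs_right; lra)).
    apply Rmult_lt_compat_r with (r := x - r) in Hq; [|lra].
    unfold Rdiv in Hq. rewrite Rmult_assoc, Rinv_l in Hq by lra. nra.
  - specialize (Hq x ltac:(rewrite Rabs_left; lra)).
    apply Rmult_lt_compat_r with (r := r - x) in Hq; [|lra].
    replace ((g x - g r) / (x - r) * (r - x)) with (g r - g x) in Hq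
      by (field; lra). nra.
Qed.

(* Sign propagation.  A function that can cross zero only downwards
   (g' < 0 wherever g = 0) and is nonpositive at t stays negative after t. *)

Lemma neg_just_after (g dg : R -> R) t : g t <= 0 -> is_derive g t (dg t) ->
  (g t = 0 -> dg t < 0) -> exists e, 0 < e /\ forall x, t < x < t + e -> g x < 0.
Proof.
  intros Hgt Hd Hz. destruct (Req_dec (g t) 0) as [E|E].
  - destruct (derive_neg_local g t (dg t) Hd (Hz E)) as [e [He [Hr _]]].
    exists e. split; [exact He | intros x Hx; rewrite <- E; apply Hr, Hx].
  - destruct (derive_close g t (dg t) Hd (- g t) ltac:(lra)) as [d [Hd0 Hc]].
    exists d. split; [exact Hd0|]. intros x Hx.
    specialize (Hc x ltac:(rewrite Rabs_right; lra)). apply Rabs_def2 in Hc. lra.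
Qed.

Lemma neg_at_limit (g dg : R -> R) t m : t < m -> (forall x, t < x < m -> g x < 0) ->
  is_derive g m (dg m) -> (g m = 0 -> dg m < 0) -> g m < 0.
Proof.
  intros Htm Hleft Hd Hz. destruct (Rlt_or_le (g m) 0) as [H|H]; [exact H|]. exfalso.
  assert (Hpos : exists e, 0 < e /\ forall x, m - e < x < m -> 0 < g x).
  { destruct (Req_dec (g m) 0) as [E|E].
    - destruct (derive_neg_local g m (dg m) Hd (Hz E)) as [e [He [_ Hl]]].
      exists e. split; [exact He | intros x Hx; rewrite <- E; apply Hl, Hx].
    - destruct (derive_close g m (dg m) Hd (g m) ltac:(lra)) as [e [He Hc]].
      exists e. split; [exact He|]. intros x Hx.
      specialize (Hc x ltac:(rewrite Rabs_left; lra)). apply Rabs_def2 in Hc. lra. }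
  destruct Hpos as [e [He Hpos]].
  set (x := Rmax ((t + m) / 2) (m - e / 2)).
  assert ((t + m) / 2 <= x) by apply Rmax_l. assert (m - e / 2 <= x) by apply Rmax_r.
  assert (x < m) by (apply Rmax_lub_lt; lra).
  specialize (Hpos x ltac:(lra)). specialize (Hleft x ltac:(lra)). lra.
Qed.

Lemma sign_forward (g dg : R -> R) t s : t < s -> g t <= 0 ->
  (forall r, t <= r <= s -> is_derive g r (dg r)) ->
  (forall r, t <= r <= s -> g r = 0 -> dg r < 0) -> g s < 0.
Proof.
  intros Hts Hgt Hd Hz.
  set (E := fun r => t < r <= s /\ forall x, t < x <= r -> g x < 0).
  destruct (neg_just_after g dg t Hgt (Hd t ltac:(lra)) (Hz t ltac:(lra)))
    as [e [He Hneg]].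
  assert (HE0 : E (Rmin s (t + e / 2))).
  { assert (Rmin s (t + e / 2) <= s) by apply Rmin_l.
    assert (Rmin s (t + e / 2) <= t + e / 2) by apply Rmin_r.
    split; [split; [apply Rmin_glb_lt; lra | lra] | intros x Hx; apply Hneg; lra]. }
  destruct (completeness E) as [m [Hub Hlub]].
  { exists s. intros r [Hr _]. lra. }
  { exists (Rmin s (t + e / 2)). exact HE0. }
  assert (Htm : t < m <= s).
  { split; [apply Rlt_le_trans with (Rmin s (t + e / 2)); [apply HE0 | apply Hub, HE0]|].
    apply Hlub. intros r [Hr _]. lra. }
  assert (Hleft : forall x, t < x < m -> g x < 0).
  { intros x Hx. destruct (classic (exists r, E r /\ x < r)) as [[r [[_ Hr] Hxr]]|Hn].
    - apply Hr. lra.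
    - assert (m <= x); [|lra]. apply Hlub. intros r Hr.
      destruct (Rle_or_lt r x) as [Hrx|Hrx]; [exact Hrx | exfalso; apply Hn; eauto]. }
  assert (Hm : g m < 0)
    by (apply (neg_at_limit g dg t m); [lra | exact Hleft | apply Hd | apply Hz]; lra).
  destruct (Req_dec m s) as [Ems|Ems]; [rewrite <- Ems; exact Hm|]. exfalso.
  destruct (neg_just_after g dg m ltac:(lra) (Hd m ltac:(lra)) (Hz m ltac:(lra)))
    as [e' [He' Hneg']].
  set (r' := Rmin s (m + e' / 2)).
  assert (r' <= s) by apply Rmin_l. assert (r' <= m + e' / 2) by apply Rmin_r.
  assert (m < r') by (apply Rmin_glb_lt; lra).
  assert (E r') as HE'.
  { split; [lra|]. intros x Hx.
    destruct (Rlt_or_le x m); [apply Hleft; lra|].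
    destruct (Req_dec x m) as [->|]; [exact Hm | apply Hneg'; lra]. }
  specialize (Hub r' HE'). lra.
Qed.

Lemma nonincreasing (g dg : R -> R) a b : a <= b ->
  (forall x, a <= x <= b -> is_derive g x (dg x)) ->
  (forall x, a <= x <= b -> dg x <= 0) -> g b <= g a.
Proof.
  intros Hab Hd Hs.
  assert (H := MVT_gen g a b dg). cbv zeta in H.
  rewrite Rmin_left, Rmax_right in H by lra.
  destruct H as [x [Hx E]].
  - intros x Hx; apply Hd; lra.
  - intros x Hx. apply continuity_pt_filterlim, (@ex_derive_continuous R_AbsRing R_NormedModule).
    exists (dg x). apply Hd; lra.
  - specialize (Hs x Hx). nra.
Qed.

Lemma gronwall (W P D dD : R -> R) a b : a <= b ->
  (forall x, a <= x <= b -> is_derive W x (P x * W x)) ->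
  (forall x, a <= x <= b -> is_derive D x (dD x)) ->
  (forall x, a <= x <= b -> 0 <= W x) ->
  (forall x, a <= x <= b -> P x <= dD x) ->
  W b <= W a * exp (D b - D a).
Proof.
  intros Hab HW HD Hpos Hle.
  assert (Hdecay : W b * exp (- D b) <= W a * exp (- D a)).
  { apply (nonincreasing (fun x => W x * exp (- D x))
             (fun x => W x * exp (- D x) * (P x - dD x)) a b Hab).
    - intros x Hx.
      assert (He := is_derive_comp exp (fun x => - D x) x _ _ (is_derive_exp _)
                      (is_derive_opp _ _ _ (HD x Hx))).
      apply (is_derive_eq _ _ _ _ (is_derive_mult _ _ _ _ _ (HW x Hx) He Rmult_comm)).
      unfold plus, mult, scal, opp; simpl. unfold mult; simpl. ring.
    - intros x Hx. specialize (Hpos x Hx). specialize (Hle x Hx).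
      pose proof (exp_pos (- D x)).
      assert (0 <= W x * exp (- D x)) by (apply Rmult_le_pos; lra). nra. }
  replace (W b) with (W b * exp (- D b) * exp (D b))
    by (rewrite Rmult_assoc, <- exp_plus, Rplus_opp_l, exp_0; ring).
  replace (D b - D a) with (- D a + D b) by ring. rewrite exp_plus, <- Rmult_assoc.
  apply Rmult_le_compat_r; [left; apply exp_pos | exact Hdecay].
Qed.

Definition fq (q : R -> R) := fun s : R => q s / s ^ 2.

Section Weight.
Variable q : R -> R.
Hypothesis q_cont : cont01 q.

Lemma fq_cont s : J01 s -> continuous (fq q) s.
Proof.
  intros Hs. apply continuity_pt_filterlim.
  apply (continuity_pt_div q (fun s => s ^ 2)).
  - apply continuity_pt_filterlim, cont01_interior; assumption.
  - apply continuity_pt_filterlim, (@ex_derive_continuous R_AbsRing R_NormedModule). auto_derive. auto.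
  - red in Hs. apply pow_nonzero. lra.
Qed.

Lemma fq_ex_RInt a b : 0 < a < 1 -> 0 < b < 1 -> ex_RInt (fq q) a b.
Proof.
  intros Ha Hb. apply (@ex_RInt_continuous R_CompleteNormedModule). intros z Hz. apply fq_cont. red.
  destruct (Rle_dec a b);
    [rewrite Rmin_left, Rmax_right in Hz | rewrite Rmin_right, Rmax_left in Hz]; lra.
Qed.

Lemma fq_deriv a s : 0 < a < 1 -> 0 < s < 1 ->
  is_derive (fun b => RInt (fq q) a b) s (fq q s).
Proof.
  intros Ha Hs.
  apply (@is_derive_RInt R_CompleteNormedModule (fq q) (fun b => RInt (fq q) a b) a s).
  - assert (Hr : 0 < Rmin s (1 - s) / 2)
      by (apply Rdiv_lt_0_compat; [apply Rmin_glb_lt|]; lra).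
    exists (mkposreal _ Hr). intros b Hb. apply RInt_correct, fq_ex_RInt; [exact Ha|].
    change (Rabs (b - s) < Rmin s (1 - s) / 2) in Hb. apply Rabs_def2 in Hb.
    assert (Rmin s (1 - s) <= s) by apply Rmin_l.
    assert (Rmin s (1 - s) <= 1 - s) by apply Rmin_r. lra.
  - apply fq_cont. exact Hs.
Qed.

Hypothesis q_pos : forall x, J01 x -> 0 < q x.

(* As q/phi^2 >= 0, every integral over [t, delta] is at most the improper
   integral over (0, delta] plus 1. *)
Lemma fq_bound d l : 0 < d < 1 -> is_RInt_gen (fq q) (at_right 0) (at_point d) l ->
  forall t, 0 < t < d -> RInt (fq q) t d <= l + 1.
Proof.
  intros Hd Hl t Ht.
  destruct (Hl (ball l (mkposreal 1 Rlt_0_1)) (locally_ball _ _))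
    as [Q Pd [eps Heps] HPd HQP]. simpl in HPd.
  set (a := Rmin t eps / 2).
  assert (Rmin t eps <= t) by apply Rmin_l. assert (Rmin t eps <= eps) by apply Rmin_r.
  assert (He : 0 < eps) by apply cond_pos.
  assert (Ha : 0 < a) by (apply Rdiv_lt_0_compat; [apply Rmin_glb_lt|]; lra).
  assert (Hat : a < t /\ a < eps) by (unfold a; lra).
  assert (HQa : Q a).
  { apply Heps; [|exact Ha]. change (Rabs (a - 0) < eps).
    rewrite Rminus_0_r, Rabs_right; lra. }
  destruct (HQP a d HQa HPd) as [v [Hv Hvl]]. simpl in Hv, Hvl.
  change (Rabs (v - l) < 1) in Hvl. apply Rabs_def2 in Hvl.
  apply (@is_RInt_unique R_CompleteNormedModule) in Hv.
  assert (Hch := RInt_Chasles (fq q) a t d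
                   (fq_ex_RInt a t ltac:(lra) ltac:(lra))
                   (fq_ex_RInt t d ltac:(lra) ltac:(lra))).
  assert (Hpos : 0 <= RInt (fq q) a t).
  { apply RInt_ge_0; [lra | apply fq_ex_RInt; lra|].
    intros x Hx. apply Rlt_le, Rdiv_lt_0_compat; [apply q_pos; red; lra|].
    apply pow_lt. lra. }
  change (plus (RInt (fq q) a t) (RInt (fq q) t d)) with
         (RInt (fq q) a t + RInt (fq q) t d) in Hch.
  lra.
Qed.

End Weight.

Section Comparison.
Variables h q : R -> R.
Hypothesis q_pos : forall x, J01 x -> 0 < q x.

Lemma sol_deriv c y x : solves_ode h q c y -> 0 < x < 1 ->
  is_derive y x (h x - c - q x / y x).
Proof. intros [_ [Hd _]] Hx. apply Hd, Hx. Qed.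

Lemma sol_neg c y x : solves_ode h q c y -> 0 < x < 1 -> y x < 0.
Proof. intros [_ [_ Hn]] Hx. apply Hn, Hx. Qed.

Lemma above_before c cs y zs phi0 : solves_ode h q c y -> solves_ode h q cs zs ->
  cs < c -> 0 < phi0 < 1 -> y phi0 = zs phi0 -> forall t, 0 < t < phi0 -> zs t <= y t.
Proof.
  intros Hy Hz Hc Hp E t Ht.
  destruct (Rle_or_lt (zs t) (y t)) as [H|H]; [exact H|]. exfalso.
  assert (y phi0 - zs phi0 < 0); [|lra].
  apply (sign_forward (fun r => y r - zs r)
           (fun r => (h r - c - q r / y r) - (h r - cs - q r / zs r)) t phi0); try lra.
  - intros r Hr. apply is_derive_Rminus;
      [apply (sol_deriv c) | apply (sol_deriv cs)]; auto; lra.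
  - intros r Hr E0. replace (y r) with (zs r) by lra. lra.
Qed.

Lemma below_after c cs y zs phi0 : solves_ode h q c y -> solves_ode h q cs zs ->
  cs < c -> 0 < phi0 < 1 -> y phi0 = zs phi0 -> forall s, phi0 < s < 1 ->
  y s <= zs s - (c - cs) / 2 * (s - phi0).
Proof.
  intros Hy Hz Hc Hp E s Hs.
  cut (y s - zs s + (c - cs) / 2 * (s - phi0) < 0); [lra|].
  apply (sign_forward (fun r => y r - zs r + (c - cs) / 2 * (r - phi0))
     (fun r => (h r - c - q r / y r) - (h r - cs - q r / zs r) + (c - cs) / 2) phi0 s);
    [lra | rewrite E; lra | |].
  - intros r Hr.
    assert (Hlin : is_derive (fun r => (c - cs) / 2 * (r - phi0)) r ((c - cs) / 2))
      by (auto_derive; [exact I | ring]).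
    apply (is_derive_eq _ _ _ _ (is_derive_plus _ _ _ _ _
             (is_derive_Rminus y zs r _ _ (sol_deriv c y r Hy ltac:(lra))
                (sol_deriv cs zs r Hz ltac:(lra))) Hlin)).
    unfold plus; simpl. ring.
  - intros r Hr E0.
    assert (Hzn : zs r < 0) by (apply (sol_neg cs); auto; lra).
    assert (q r / zs r <= q r / y r)
      by (apply div_neg_le; [nra | exact Hzn | apply Rlt_le, q_pos; red; lra]).
    lra.
Qed.

Lemma vanishes_at_0 c cs y zs phi0 : solves_ode h q c y -> solves_Pc h q cs zs ->
  cs < c -> 0 < phi0 < 1 -> y phi0 = zs phi0 -> y 0 = 0.
Proof.
  intros Hy [Hz Hz0] Hc Hp E. apply Rle_antisym.
  - apply (le_limit_right y (fun _ => 0) 1 0); [lra | | apply filterlim_const |].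
    + apply cont01_at_right; [apply Hy | lra].
    + intros r Hr. apply Rlt_le, (sol_neg c); assumption.
  - rewrite <- Hz0 at 1. apply (le_limit_right zs y phi0 0); [lra | | |].
    + apply cont01_at_right; [apply Hz | lra].
    + apply cont01_at_right; [apply Hy | lra].
    + intros r Hr. apply (above_before c cs y zs phi0); auto.
Qed.

Lemma ordered_as_at_1 c y z : solves_ode h q c y -> solves_ode h q c z -> z 1 <= y 1 ->
  forall t, 0 < t < 1 -> z t <= y t.
Proof.
  intros Hy Hz H1 t Ht. destruct (Rle_or_lt (z t) (y t)) as [H|H]; [exact H|]. exfalso.
  set (k := (z t - y t) / 2).
  assert (Hk : forall s, t < s < 1 -> y s - z s <= - k).
  { intros s Hs. apply Rlt_le.
    cut (y s - z s + k < 0); [lra|].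
    apply (sign_forward (fun r => y r - z r + k)
             (fun r => (h r - c - q r / y r) - (h r - c - q r / z r)) t s);
      [lra | unfold k; lra | |].
    - intros r Hr.
      apply (is_derive_eq _ _ _ _ (is_derive_plus _ _ _ _ _
               (is_derive_Rminus y z r _ _ (sol_deriv c y r Hy ltac:(lra))
                  (sol_deriv c z r Hz ltac:(lra))) (is_derive_const k r))).
      unfold plus, zero; simpl. ring.
    - intros r Hr E0.
      assert (Hzn : z r < 0) by (apply (sol_neg c); auto; lra).
      assert (q r / z r < q r / y r)
        by (apply div_neg_lt; [unfold k in E0; lra | exact Hzn | apply q_pos; red; lra]).
      lra. }
  assert (y 1 - z 1 <= - k); [|unfold k in *; lra].
  apply (le_limit_left (fun r => y r - z r) (fun _ => - k) t 1 (y 1 - z 1) (- k)); [lra | | apply filterlim_const | exact Hk].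
  apply (cont01_at_left (fun r => y r - z r) 1); [apply cont01_minus; [apply Hy | apply Hz] | lra].
Qed.

Lemma gap_equation c y z r : solves_ode h q c y -> solves_ode h q c z -> 0 < r < 1 ->
  is_derive (fun r => y r - z r) r (q r / (y r * z r) * (y r - z r)).
Proof.
  intros Hy Hz Hr.
  apply (is_derive_eq _ _ _ _ (is_derive_Rminus _ _ _ _ _ (sol_deriv c y r Hy Hr)
                                  (sol_deriv c z r Hz Hr))).
  assert (y r < 0) by (apply (sol_neg c); auto).
  assert (z r < 0) by (apply (sol_neg c); auto).
  field. split; lra.
Qed.

Hypothesis h_cont : cont01 h.

(* A solution of (P_c) is bounded below by -M phi near 0, since its slope is
   at most c - h(0) + 1 there (q/z < 0). *)
Lemma linear_lower_bound c z : solves_Pc h q c z ->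
  exists rho M, 0 < rho <= 1 /\ 0 < M /\ forall s, 0 < s < rho -> - z s <= M * s.
Proof.
  intros [Hz Hz0].
  destruct (cont01_within h 0 _ 1 h_cont ltac:(red; lra) ltac:(lra)
              (fun u (Hu : I01 u) _ => Hu)
              (ball (h 0) (mkposreal 1 Rlt_0_1)) (locally_ball _ _)) as [d Hd].
  set (M := Rabs (c - h 0) + 1).
  assert (HM : 0 < M) by (unfold M; pose proof (Rabs_pos (c - h 0)); lra).
  exists (Rmin d 1), M.
  assert (Rmin d 1 <= d) by apply Rmin_l. assert (Rmin d 1 <= 1) by apply Rmin_r.
  split; [split; [apply Rmin_glb_lt; [apply cond_pos | lra] | lra]|]. split; [exact HM|].
  intros s Hs.
  assert (Hslope : forall t, 0 < t < s -> z t <= z s + M * s).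
  { intros t Ht.
    assert (Hn := nonincreasing (fun r => - M * r - z r)
                    (fun r => - M - (h r - c - q r / z r)) t s ltac:(lra)).
    cbv beta in Hn. cut (- M * s - z s <= - M * t - z t); [nra|].
    apply Hn.
    - intros r Hr. apply is_derive_Rminus; [auto_derive; [exact I | ring]|].
      apply (sol_deriv c); auto; lra.
    - intros r Hr.
      assert (Hh : Rabs (h r - h 0) < 1).
      { apply (Hd r); [change (Rabs (r - 0) < d); rewrite Rminus_0_r, Rabs_right|red]; lra. }
      apply Rabs_def2 in Hh.
      assert (z r < 0) by (apply (sol_neg c); auto; lra).
      assert (0 < q r) by (apply q_pos; red; lra).
      assert (0 < - (q r / z r)) by (rewrite <- Rdiv_opp_r; apply Rdiv_lt_0_compat; lra).
      assert (c - h 0 <= Rabs (c - h 0)) by apply Rle_abs.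
      unfold M in *. lra. }
  assert (z 0 <= z s + M * s); [|lra].
  apply (le_limit_right z (fun _ => z s + M * s) s 0); [lra | | apply filterlim_const | exact Hslope].
  apply cont01_at_right; [apply Hz | lra].
Qed.

End Comparison.

Section GapEstimate.
Variables h q : R -> R.
Hypothesis q_cont : cont01 q.
Hypothesis q_pos : forall x, J01 x -> 0 < q x.
Hypothesis h_cont : cont01 h.

Lemma gap_gronwall c y z (D dD : R -> R) a b :
  solves_ode h q c y -> solves_ode h q c z -> 0 < a <= b -> b < 1 ->
  (forall r, a <= r <= b -> z r <= y r) ->
  (forall r, a <= r <= b -> is_derive D r (dD r)) ->
  (forall r, a <= r <= b -> q r / (y r * z r) <= dD r) ->
  y b - z b <= (y a - z a) * exp (D b - D a).
Proof.
  intros Hy Hz Ha Hb Hord HD Hle.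
  apply (gronwall (fun r => y r - z r) (fun r => q r / (y r * z r)) D dD a b);
    [lra | | exact HD | | exact Hle].
  - intros r Hr. apply (gap_equation h q c); auto; lra.
  - intros r Hr. specialize (Hord r Hr). lra.
Qed.

(* On [2 phi0, delta] we have y <= -k phi/2, so q/(yz) <= 4/k^2 q/phi^2. *)
Lemma gap_near c y z k phi0 d : solves_ode h q c y -> solves_ode h q c z ->
  (forall r, 0 < r < 1 -> z r <= y r) -> 0 < k -> 0 < phi0 -> 2 * phi0 <= d < 1 ->
  (forall r, phi0 < r < 1 -> y r <= - k * (r - phi0)) ->
  y d - z d <=
  (y (2 * phi0) - z (2 * phi0)) * exp (4 / (k * k) * RInt (fq q) (2 * phi0) d).
Proof.
  intros Hy Hz Hord Hk Hp Hd Hline.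
  set (K := 4 / (k * k)).
  assert (H := gap_gronwall c y z (fun r => K * RInt (fq q) (2 * phi0) r)
                 (fun r => K * fq q r) (2 * phi0) d Hy Hz ltac:(lra) ltac:(lra)).
  assert (E : RInt (fq q) (2 * phi0) (2 * phi0) = 0)
    by apply (@RInt_point R_CompleteNormedModule).
  cbv beta in H. rewrite E, Rmult_0_r, Rminus_0_r in H. apply H.
  - intros r Hr. apply Hord. lra.
  - intros r Hr. apply is_derive_scal, fq_deriv; [exact q_cont | lra | lra].
  - intros r Hr. unfold fq, K.
    replace (4 / (k * k) * (q r / r ^ 2)) with (q r / ((k * r / 2) * (k * r / 2)))
      by (field; lra).
    specialize (Hline r ltac:(lra)).
    apply div_by_product_le; [apply Rlt_le, q_pos; red; lra | nra | nra | apply Hord; lra].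
Qed.

(* On [delta, 1] we have y <= -k delta/2, so q/(yz) is bounded by a constant. *)
Lemma gap_far c y z k phi0 d Qb : solves_ode h q c y -> solves_ode h q c z ->
  (forall r, 0 < r < 1 -> z r <= y r) -> 0 < k -> 0 < phi0 -> 2 * phi0 <= d < 1 ->
  (forall r, phi0 < r < 1 -> y r <= - k * (r - phi0)) ->
  (forall r, d <= r < 1 -> q r <= Qb) ->
  y 1 - z 1 <= (y d - z d) * exp (Qb / ((k * d / 2) * (k * d / 2))).
Proof.
  intros Hy Hz Hord Hk Hp Hd Hline HQb.
  set (m := k * d / 2). set (B := Qb / (m * m)).
  assert (Hm : 0 < m) by (unfold m; nra).
  assert (HB : 0 <= B).
  { apply Rdiv_le_0_compat; [|nra].
    apply Rle_trans with (q ((d + 1) / 2)); [apply Rlt_le, q_pos; red; lra | apply HQb; lra]. }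
  apply (le_limit_left (fun r => y r - z r) (fun _ => (y d - z d) * exp B) d 1
           (y 1 - z 1) ((y d - z d) * exp B)); [lra | | apply filterlim_const |].
  { apply (cont01_at_left (fun r => y r - z r) 1); [apply cont01_minus; [apply Hy | apply Hz] | lra]. }
  intros x Hx.
  apply Rle_trans with ((y d - z d) * exp (B * x - B * d)).
  - apply (gap_gronwall c y z (fun r => B * r) (fun _ => B) d x Hy Hz); try lra.
    + intros r Hr. apply Hord. lra.
    + intros r Hr. auto_derive; [exact I | ring].
    + intros r Hr. specialize (Hline r ltac:(lra)).
      apply Rle_trans with (q r / (m * m)).
      * apply div_by_product_le; [apply Rlt_le, q_pos; red; lra | exact Hm | unfold m; nra |].
        apply Hord. lra.
      * unfold B, Rdiv. apply Rmult_le_compat_r; [left; apply Rinv_0_lt_compat; nra|].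
        apply HQb. lra.
  - apply Rmult_le_compat_l; [specialize (Hord d ltac:(lra)); lra|].
    apply exp_le. nra.
Qed.

(* If y(phi0) = zs(phi0) for a solution zs of (P_cs), cs < c, and z solves
   (P_c) with the least value at 1, then 0 <= y(1) - z(1) <= C phi0 for all
   small phi0: combine the near and far Gronwall bounds with z >= -M phi. *)
Lemma endpoint_gap_linear c cs zs z d l : cs < c -> solves_Pc h q cs zs ->
  solves_Pc h q c z -> (forall y, solves_Pc h q c y -> z 1 <= y 1) -> 0 < d < 1 ->
  is_RInt_gen (fq q) (at_right 0) (at_point d) l ->
  exists r C, 0 < r < 1 /\ forall y phi0, 0 < phi0 < r -> solves_ode h q c y ->
    y phi0 = zs phi0 -> 0 <= y 1 - z 1 <= C * phi0.
Proof.
  intros Hc Hzs Hz Hmin Hd Hl.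
  destruct (linear_lower_bound h q q_pos h_cont c z Hz) as [rho [M [Hrho [HM Hlow]]]].
  destruct (bounded01 q q_cont) as [Qb HQb].
  set (k := (c - cs) / 2).
  set (eK := exp (4 / (k * k) * (l + 1))).
  set (eB := exp (Qb / ((k * d / 2) * (k * d / 2)))).
  exists (Rmin (d / 2) (rho / 2)), (2 * M * eK * eB).
  assert (Rmin (d / 2) (rho / 2) <= d / 2) by apply Rmin_l.
  assert (Rmin (d / 2) (rho / 2) <= rho / 2) by apply Rmin_r.
  split; [split; [apply Rmin_glb_lt|]; lra|]. intros y phi0 Hp Hy E.
  assert (Hk : 0 < k) by (unfold k; lra).
  assert (Hy1 : z 1 <= y 1).
  { apply Hmin. split; [exact Hy | apply (vanishes_at_0 h q c cs y zs phi0); auto; lra]. }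
  assert (Hord : forall r, 0 < r < 1 -> z r <= y r)
    by (apply (ordered_as_at_1 h q q_pos c); [exact Hy | apply Hz | exact Hy1]).
  assert (Hline : forall r, phi0 < r < 1 -> y r <= - k * (r - phi0)).
  { intros r Hr.
    pose proof (below_after h q q_pos c cs y zs phi0 Hy (proj1 Hzs) Hc ltac:(lra) E r Hr).
    pose proof (sol_neg h q cs zs r (proj1 Hzs) ltac:(lra)). unfold k. lra. }
  assert (Hnear := gap_near c y z k phi0 d Hy (proj1 Hz) Hord Hk ltac:(lra) ltac:(lra) Hline).
  assert (Hfar := gap_far c y z k phi0 d Qb Hy (proj1 Hz) Hord Hk ltac:(lra) ltac:(lra)
                    Hline (fun r Hr => HQb r ltac:(red; lra))).
  assert (Hint : 4 / (k * k) * RInt (fq q) (2 * phi0) d <= 4 / (k * k) * (l + 1)).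
  { apply Rmult_le_compat_l; [apply Rlt_le, Rdiv_lt_0_compat; nra|].
    apply (fq_bound q q_cont q_pos d l Hd Hl). lra. }
  assert (Hstart : y (2 * phi0) - z (2 * phi0) <= M * (2 * phi0)).
  { pose proof (Hlow (2 * phi0) ltac:(lra)).
    pose proof (sol_neg h q c y (2 * phi0) Hy ltac:(lra)). lra. }
  assert (H2 : 0 <= y (2 * phi0) - z (2 * phi0)) by (pose proof (Hord (2 * phi0) ltac:(lra)); lra).
  split; [lra|].
  apply Rle_trans with ((y d - z d) * eB); [exact Hfar|].
  replace (2 * M * eK * eB * phi0) with (M * (2 * phi0) * eK * eB) by ring.
  apply Rmult_le_compat_r; [left; apply exp_pos|].
  eapply Rle_trans; [exact Hnear|].
  apply Rmult_le_compat; [exact H2 | left; apply exp_pos | exact Hstart | apply exp_le, Hint].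
Qed.

End GapEstimate.

Lemma limit_of_linear_squeeze (u : R -> R) b b' C r : 0 < r ->
  (forall p, 0 < p < r -> 0 <= u p - b <= C * p) ->
  filterlim u (at_right 0) (locally b') -> b = b'.
Proof.
  intros Hr Hsq Hlim.
  apply (filterlim_locally_unique (F := at_right 0) u); [|exact Hlim].
  apply (filterlim_le_le (fun _ => b) u (fun p => b + C * p) b).
  - exists (mkposreal r Hr). intros p Hp Hp0.
    change (Rabs (p - 0) < r) in Hp. apply Rabs_def2 in Hp.
    specialize (Hsq p ltac:(lra)). lra.
  - apply filterlim_const.
  - assert (Hc : continuous (fun p => b + C * p) 0).
    { apply (@ex_derive_continuous R_AbsRing R_NormedModule). auto_derive. exact I. }
    unfold continuous in Hc. cbv beta in Hc. rewrite Rmult_0_r, Rplus_0_r in Hc.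
    eapply filterlim_filter_le_1; [apply filter_le_within | exact Hc].
Qed.

Theorem proposition8p3
  (f h q : R -> R)
  (Hf : C1_with_deriv f h) (Hf0 : f 0 = 0)
  (Hq : cond_q q)
  (Hqlim : exists L : R, 0 <= L /\ filterlim (fun p => q p / p) (at_right 0) (locally L))
  (Hint : exists delta : R, 0 < delta < 1 /\
            ex_RInt_gen (fun s => q s / s ^ 2) (at_right 0) (at_point delta))
  (cstar : R)
  (Hcstar : forall c : R, (exists z, solves_Pc h q c z /\ z 1 = 0) <-> cstar <= c)
  (zstar : R -> R) (Hzstar : solves_Pc h q cstar zstar /\ zstar 1 = 0)
  (Hch : h 0 < cstar)
  (c : R) (Hc : cstar < c)
  (beta : R) (Hbeta_neg : beta < 0)
  (Hbeta : forall b : R, b < 0 -> ((exists z, solves_Pc h q c z /\ z 1 = b) <-> beta <= b))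
  (zhat : R -> R -> R)
  (Hzhat : forall phi0 : R, 0 < phi0 < 1 ->
             solves_ode h q c (zhat phi0) /\ zhat phi0 phi0 = zstar phi0)
  (betahat : R)
  (Hbetahat : filterlim (fun phi0 => zhat phi0 1) (at_right 0) (locally betahat)) :
  beta = betahat.
Proof.
  destruct Hq as [Hqc [Hqp _]]. destruct Hf as [Hhc _].
  destruct Hint as [d [Hd [l Hl]]].
  destruct (proj2 (Hbeta beta Hbeta_neg) (Rle_refl _)) as [z [Hz Hz1]].
  assert (Hmin : forall y, solves_Pc h q c y -> z 1 <= y 1).
  { intros y Hy. rewrite Hz1. destruct (Rlt_or_le (y 1) 0) as [Hneg|Hnn].
    - apply (Hbeta (y 1) Hneg). exists y. split; [exact Hy | reflexivity].
    - lra. }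
  destruct (endpoint_gap_linear h q Hqc Hqp Hhc c cstar zstar z d l Hc (proj1 Hzstar)
              Hz Hmin Hd Hl) as [r [C [Hr Hgap]]].
  apply (limit_of_linear_squeeze (fun p => zhat p 1) beta betahat C r (proj1 Hr));
    [|exact Hbetahat].
  intros p Hp. rewrite <- Hz1.
  destruct (Hzhat p ltac:(lra)) as [Hy E].
  exact (Hgap (zhat p) p Hp Hy E).
Qed.
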